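(* For every state $p$, the state $p$ itself is a vertex (extreme point) of the convex polytope $p^{TP}=\{Tp : T\in TP(d)\}$.
   Context: Fix $d\ge 2$, $\beta\in(0,\infty)$ and pairwise distinct reals $E_0=0,E_1,\dots,E_{d-1}$. Put $q_{m,n}=e^{-\beta(E_m-E_n)}$, $Z=\sum_j q_{j,0}$, $g_i=q_{i,0}/Z$. A state is a probability vector in $\mathbb{R}^d$. $TP(d)$ is the set of $d\times d$ real matrices with non-negative entries, columns summing to $1$, and $Tg=g$. *)

From HB Require Import structures.
From mathcomp Require Import all_boot all_order all_algebra.
From mathcomp Require Import all_classical all_reals all_analysis.
Set Implicit Arguments. Unset Strict Implicit. Unset Printing Implicit Defensive.
Import Order.TTheory GRing.Theory Num.Theory.
Local Open Scope ring_scope.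

Definition qf {R : realType} {d : nat} (beta : R) (E : 'I_d -> R) (m n : 'I_d) : R :=
  expR (- (beta * (E m - E n))).

Definition Zpart {R : realType} {d : nat} (beta : R) (E : 'I_d -> R) (i0 : 'I_d) : R :=
  \sum_(j < d) qf beta E j i0.

Definition gibbs {R : realType} {d : nat} (beta : R) (E : 'I_d -> R) (i0 : 'I_d) : 'cV[R]_d :=
  \col_(i < d) (qf beta E i i0 / Zpart beta E i0).

Definition is_state {R : realType} {d : nat} (p : 'cV[R]_d) : Prop :=
  (forall i, 0 <= p i 0) /\ \sum_(i < d) p i 0 = 1.

Definition in_TP {R : realType} {d : nat} (beta : R) (E : 'I_d -> R) (i0 : 'I_d)
  (T : 'M[R]_d) : Prop :=
  (forall i j, 0 <= T i j) /\ (forall j, \sum_(i < d) T i j = 1) /\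
  T *m gibbs beta E i0 = gibbs beta E i0.

Definition TP_orbit {R : realType} {d : nat} (beta : R) (E : 'I_d -> R) (i0 : 'I_d)
  (p : 'cV[R]_d) : 'cV[R]_d -> Prop :=
  fun x => exists T, in_TP beta E i0 T /\ x = T *m p.

Definition is_extreme_point {R : realType} {d : nat} (S : 'cV[R]_d -> Prop) (x : 'cV[R]_d) : Prop :=
  S x /\ forall (y z : 'cV[R]_d) (t : R), S y -> S z -> 0 < t -> t < 1 ->
    x = t *: y + (1 - t) *: z -> y = x /\ z = x.

From HB Require Import structures.
From mathcomp Require Import all_boot all_order all_algebra.
From mathcomp Require Import all_classical all_reals all_analysis.
From mathcomp Require Import ring lra.
Set Implicit Arguments. Unset Strict Implicit. Unset Printing Implicit Defensive.
Import Order.TTheory GRing.Theory Num.Theory.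
Local Open Scope ring_scope.

(* The chi-square functional [chi2 x = \sum_i x_i^2 / g_i] of the Gibbs state g
   is a strictly convex quadratic form that cannot increase under any
   Gibbs-preserving stochastic matrix (a weighted Cauchy-Schwarz inequality,
   row by row).  Hence p maximises chi2 on its orbit p^TP.  If
   p = t y + (1 - t) z with y, z in the orbit, the identity
   chi2 p = t chi2 y + (1 - t) chi2 z - t (1 - t) chi2 (y - z)
   forces chi2 (y - z) = 0. *)

(* No positivity of the denominator is assumed: if it vanishes, the left side
   is 0 because [x / 0 = 0]. *)
Lemma sqr_wsum_le (R : realFieldType) (I : finType) (w a b : I -> R) :
  (forall i, 0 <= w i) -> (forall i, 0 < b i) ->
  (\sum_i w i * a i) ^+ 2 / (\sum_i w i * b i) <= \sum_i w i * (a i ^+ 2 / b i).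
Proof.
move=> w_ge0 b_gt0.
set c := \sum_i w i * b i; set B := \sum_i w i * a i.
set A := \sum_i w i * (a i ^+ 2 / b i).
have A_ge0 : 0 <= A.
  by apply: sumr_ge0 => i _; rewrite mulr_ge0 // divr_ge0 ?sqr_ge0 // ltW.
have [->|c_neq0] := eqVneq c 0; first by rewrite invr0 mulr0.
set l := B / c.
have : 0 <= \sum_i w i * ((a i - l * b i) ^+ 2 / b i).
  by apply: sumr_ge0 => i _; rewrite mulr_ge0 // divr_ge0 ?sqr_ge0 // ltW.
have -> : \sum_i w i * ((a i - l * b i) ^+ 2 / b i) = A - 2 * l * B + l ^+ 2 * c.
  rewrite /A /B /c !mulr_sumr -sumrB -big_split /=.
  apply: eq_bigr => i _; have := b_gt0 i; rewrite lt0r => /andP[bi_neq0 _].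
  by field.
have -> : B ^+ 2 / c = A - (A - 2 * l * B + l ^+ 2 * c) by rewrite /l; field.
lra.
Qed.

Section Chi2.
Variables (R : realType) (d : nat) (g : 'cV[R]_d).
Hypothesis g_gt0 : forall i, 0 < g i 0.

Definition chi2 (x : 'cV[R]_d) : R := \sum_i x i 0 ^+ 2 / g i 0.

Lemma chi2_ge0 x : 0 <= chi2 x.
Proof. by apply: sumr_ge0 => i _; rewrite divr_ge0 ?sqr_ge0 // ltW. Qed.

Lemma chi2_eq0 x : chi2 x = 0 -> x = 0.
Proof.
move=> /psumr_eq0P x0; apply/matrixP => i j; rewrite (ord1 j) mxE.
have /eqP := x0 (fun i _ => divr_ge0 (sqr_ge0 _) (ltW (g_gt0 i))) i isT.
by rewrite mulf_eq0 invr_eq0 (gt_eqF (g_gt0 i)) orbF sqrf_eq0 => /eqP.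
Qed.

Lemma chi2_convex_comb (t : R) (y z : 'cV[R]_d) :
  chi2 (t *: y + (1 - t) *: z) =
  t * chi2 y + (1 - t) * chi2 z - t * (1 - t) * chi2 (y - z).
Proof.
rewrite /chi2 !mulr_sumr -big_split -sumrB /=; apply: eq_bigr => i _.
have := g_gt0 i; rewrite lt0r => /andP[gi_neq0 _].
by rewrite !mxE; field.
Qed.

Lemma chi2_stochastic_le (T : 'M[R]_d) (p : 'cV[R]_d) :
  (forall i j, 0 <= T i j) -> (forall j, \sum_i T i j = 1) -> T *m g = g ->
  chi2 (T *m p) <= chi2 p.
Proof.
move=> T_ge0 T_col Tg.
have Tg_row i : \sum_j T i j * g j 0 = g i 0.
  by have := congr1 (fun M : 'cV[R]_d => M i 0) Tg; rewrite mxE.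
apply: (@le_trans _ _ (\sum_i \sum_j T i j * (p j 0 ^+ 2 / g j 0))).
  apply: ler_sum => i _; rewrite mxE -Tg_row.
  exact: sqr_wsum_le.
by rewrite exchange_big /=; under eq_bigr do rewrite -mulr_suml T_col mul1r.
Qed.

Lemma chi2_max_extreme (S : 'cV[R]_d -> Prop) (x : 'cV[R]_d) :
  S x -> (forall y, S y -> chi2 y <= chi2 x) -> is_extreme_point S x.
Proof.
move=> Sx x_max; split=> // y z t Sy Sz t_gt0 t_lt1 x_comb.
have t_y : t * chi2 y <= t * chi2 x by rewrite ler_pM2l // x_max.
have t_z : (1 - t) * chi2 z <= (1 - t) * chi2 x by rewrite ler_pM2l ?subr_gt0 ?x_max.
have yz0 : chi2 (y - z) = 0.
  apply/eqP; rewrite eq_le chi2_ge0 andbT.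
  have tt_gt0 : 0 < t * (1 - t) by rewrite mulr_gt0 ?subr_gt0.
  rewrite -(pmulr_rle0 _ tt_gt0); have := chi2_convex_comb t y z.
  rewrite -x_comb; lra.
move/chi2_eq0/eqP: yz0; rewrite subr_eq0 => /eqP z_eq_y.
have y_eq_x : y = x by rewrite x_comb -z_eq_y -scalerDl subrKC scale1r.
by rewrite -z_eq_y y_eq_x.
Qed.

End Chi2.

Lemma gibbs_gt0 (R : realType) (d : nat) (beta : R) (E : 'I_d -> R) (i0 i : 'I_d) :
  0 < gibbs beta E i0 i 0.
Proof.
rewrite mxE divr_gt0 ?expR_gt0 // /Zpart (bigD1 i0) //= ltr_pwDl ?expR_gt0 //.
by rewrite sumr_ge0 // => j _; rewrite ltW ?expR_gt0.
Qed.

Lemma in_TP1 (R : realType) (d : nat) (beta : R) (E : 'I_d -> R) (i0 : 'I_d) :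
  in_TP beta E i0 1%:M.
Proof.
split; first by move=> i j; rewrite mxE ler0n.
split; last by rewrite mul1mx.
move=> j; rewrite (bigD1 j) //= big1 ?addr0 => [|i /negbTE ij]; rewrite mxE ?eqxx //.
by rewrite ij.
Qed.

Theorem mainTheorem3 (R : realType) (d : nat) (hd : (2 <= d)%N)
  (beta : R) (hbeta : 0 < beta) (E : 'I_d -> R) (i0 : 'I_d)
  (hi0 : nat_of_ord i0 = 0%N) (hE0 : E i0 = 0) (hEinj : injective E)
  (p : 'cV[R]_d) (hp : is_state p) :
  is_extreme_point (TP_orbit beta E i0 p) p.
Proof.
have g_gt0 := @gibbs_gt0 R d beta E i0.
apply: (chi2_max_extreme g_gt0).
  by exists 1%:M; rewrite mul1mx; split; first exact: in_TP1.
move=> _ [T [[T_ge0 [T_col Tg]] ->]].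
exact: chi2_stochastic_le.
Qed.
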